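(* For the ring grooming instance with $n=15$, $c=1$ and uniform traffic $d_{jk}=1$ for all $j\ne k$, the minimum number of ADMs is $m=105$, attained by a routing using $35$ rings with exactly three ADMs each.
   Context: Ring grooming. An instance consists of integers $n\ge 2$ (ring size) and $c\ge 1$ (capacity), and a finite list $L$ of unordered pairs $\{j,k\}$ with $j\ne k$, $j,k\in\{1,\dots,n\}$ (repetitions allowed); these are the traffic demands. Let $d_{jk}=d_{kj}$ be the number of times $\{j,k\}$ occurs in $L$ (the traffic matrix; $d_{jj}=0$). Let $C_n$ be the cycle graph on vertices $1,\dots,n$ in cyclic order, with edges $\{l,l+1\}$ for $1\le l<n$ and $\{n,1\}$. A solution uses some finite number $r$ of ''rings'', each a copy of $C_n$ in which every edge has capacity $c$. A routing specifies, for every ring $i$ and every pair $j<k$, nonnegative integers $t^0_{ijk},t^1_{ijk}$: the amounts of $\{j,k\}$-traffic sent on ring $i$ along each of the two arcs of $C_n$ between $j$ and $k$. It is feasible if $\sum_i (t^0_{ijk}+t^1_{ijk})=d_{jk}$ for all $j<k$, and for every ring $i$ and every edge $e$ of $C_n$ the total traffic routed on ring $i$ along arcs containing $e$ is at most $c$. Ring $i$ needs an ADM (add/drop multiplexer) at vertex $j$ iff some traffic with endpoint $j$ is routed on ring $i$. The cost of a routing is the total number of ADMs, i.e. the number of pairs (ring $i$, vertex $j$) at which an ADM is needed. $m=m(n,c,L)$ denotes the minimum cost over all feasible routings. *)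

From mathcomp Require Import all_boot.
Set Implicit Arguments. Unset Strict Implicit. Unset Printing Implicit Defensive.

(* Vertices of C_n are 'I_n = {0,...,n-1} (paper's vertex v+1 is our v).
   Edge l : 'I_n of C_n is {l, l+1 mod n}.  For j < k, arc 0 between j and k
   is the path j, j+1, ..., k, containing exactly the edges l with j <= l < k;
   arc 1 is the other arc, containing the remaining edges. *)
Definition on_arc (n : nat) (j k l : 'I_n) (b : bool) : bool :=
  if b then ~~ ((j <= l) && (l < k)) else (j <= l) && (l < k).

Definition traffic (n : nat) (L : seq ('I_n * 'I_n)) (j k : 'I_n) : nat :=
  count (fun p => (p == (j, k)) || (p == (k, j))) L.

Definition demand_list_ok (n : nat) (L : seq ('I_n * 'I_n)) : bool :=
  all (fun p => p.1 != p.2) L.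

(* A routing on r rings: t i j k b = t^b_{ijk} (only pairs j < k are used). *)
Definition routing (n r : nat) := 'I_r -> 'I_n -> 'I_n -> bool -> nat.

Definition feasible (n c : nat) (L : seq ('I_n * 'I_n)) (r : nat)
    (t : routing n r) : Prop :=
  (forall j k : 'I_n, j < k ->
     \sum_(i < r) (t i j k false + t i j k true) = traffic L j k) /\
  (forall (i : 'I_r) (l : 'I_n),
     \sum_(j < n) \sum_(k < n | j < k)
        (\sum_(b : bool | on_arc j k l b) t i j k b) <= c).

Definition needs_adm (n r : nat) (t : routing n r) (i : 'I_r) (v : 'I_n) : bool :=
  [exists j : 'I_n, exists k : 'I_n,
     [&& j < k, (j == v) || (k == v) & 0 < t i j k false + t i j k true]].

Definition adms_on_ring (n r : nat) (t : routing n r) (i : 'I_r) : nat :=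
  #|[set v : 'I_n | needs_adm t i v]|.

Definition cost (n r : nat) (t : routing n r) : nat :=
  \sum_(i < r) adms_on_ring t i.

Definition is_min_cost (n c : nat) (L : seq ('I_n * 'I_n)) (m : nat) : Prop :=
  (exists (r : nat) (t : routing n r), feasible c L t /\ cost t = m) /\
  (forall (r : nat) (t : routing n r), feasible c L t -> m <= cost t).

(* Uniform traffic: every unordered pair {j,k}, j != k, occurs exactly once. *)
Definition all_pairs (n : nat) : seq ('I_n * 'I_n) :=
  [seq p <- [seq (j, k) | j <- enum 'I_n, k <- enum 'I_n] | (p : 'I_n * 'I_n).1 < p.2].

From mathcomp Require Import all_boot zify.
Set Implicit Arguments. Unset Strict Implicit. Unset Printing Implicit Defensive.

(* Lower bound: in a ring, charge every unit of traffic to one of its endpoints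
   so that the units charged to v all use the edge {v, v+1}; with capacity c
   at most c units are charged to v, and none unless the ring has an ADM at v.
   So a ring carries at most c times as many demands as it has ADMs, and the
   105 demands of the uniform instance need 105 ADMs.
   Upper bound: for a < b < c the arcs a..b, b..c and the complement of a..c
   cover every edge of the cycle exactly once, so the three demands of a
   triangle fit on one ring with 3 ADMs.  The 35 lines of the projective space
   PG(3,2) form a Steiner triple system on 15 points, i.e. triangles covering
   every pair exactly once. *)

Section RingLowerBound.
Variables (n r : nat) (t : routing n r) (i : 'I_r).

Definition edge_load (l : 'I_n) : nat :=
  \sum_(j < n) \sum_(k < n | j < k) \sum_(s : bool | on_arc j k l s) t i j k s.

Definition ring_traffic : nat :=
  \sum_(j < n) \sum_(k < n | j < k) (t i j k false + t i j k true).

(* Arc 0 between j < k leaves j through edge j; arc 1 leaves k through edge k. *)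
Definition departing (l : 'I_n) : nat :=
  \sum_(j < n) \sum_(k < n | j < k) ((j == l) * t i j k false + (k == l) * t i j k true).

Lemma ring_traffic_departing : ring_traffic = \sum_(l < n) departing l.
Proof.
have charge1 (v : 'I_n) x : \sum_(l < n) (v == l) * x = x.
  under eq_bigr do rewrite mulnbl.
  by rewrite -big_mkcond (big_pred1 v).
rewrite /departing exchange_big; apply: eq_bigr => j _.
rewrite exchange_big; apply: eq_bigr => k _.
by rewrite big_split !charge1.
Qed.

Lemma departing_le_load l : departing l <= edge_load l.
Proof.
apply: leq_sum => j _; apply: leq_sum => k lt_jk.
rewrite big_mkcond big_bool /= /on_arc -!val_eqE /=.
have [<-|_] := eqVneq (val j) l.
  by rewrite (gtn_eqF lt_jk) /= leqnn lt_jk /= mul1n mul0n addn0 add0n.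
have [<-|_] := eqVneq (val k) l; last by [].
by rewrite ltnn andbF /= mul1n mul0n addn0 add0n.
Qed.

Lemma departing_no_adm l : ~~ needs_adm t i l -> departing l = 0.
Proof.
move=> /existsPn no_adm; apply: big1 => j _; apply: big1 => k lt_jk.
move: (no_adm j) => /existsPn /(_ k); rewrite lt_jk /= negb_and lt0n negbK addn_eq0.
by case: eqP => [->|_]; case: eqP => [->|_] //= /andP[/eqP-> /eqP->].
Qed.

Lemma ring_traffic_le_adms c :
  (forall l, edge_load l <= c) -> ring_traffic <= c * adms_on_ring t i.
Proof.
move=> load_le; rewrite ring_traffic_departing /adms_on_ring -sum1_card.
rewrite big_distrr /= [X in _ <= X]big_mkcond /= muln1.
apply: leq_sum => l _; rewrite inE.
case: (boolP (needs_adm t i l)) => [_|/departing_no_adm -> //].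
exact: leq_trans (departing_le_load l) (load_le l).
Qed.
End RingLowerBound.

Lemma sum_traffic_le_cost n c L r (t : routing n r) : feasible c L t ->
  \sum_(j < n) \sum_(k < n | j < k) traffic L j k <= c * cost t.
Proof.
case=> routed load_le; rewrite /cost big_distrr /=.
under eq_bigr => j _ do under eq_bigr => k lt_jk do rewrite -(routed j k lt_jk).
under eq_bigr => j _ do rewrite exchange_big.
rewrite exchange_big; apply: leq_sum => i _.
exact: ring_traffic_le_adms (load_le i).
Qed.

Lemma sum_pairs_lt n : \sum_(j < n) \sum_(k < n | j < k) 1 = 'C(n, 2).
Proof.
rewrite (exchange_big_dep xpredT) //= -bin2_sum big_mkord; apply: eq_bigr => k _.
rewrite -[LHS](big_mkord (fun j => j < k) (fun=> 1)).
transitivity (\sum_(0 <= j < k) 1); last by rewrite sum_nat_const_nat subn0 muln1.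
by rewrite (big_nat_widen 0 k n) ?(ltnW (ltn_ord k)).
Qed.

Lemma mem_all_pairs n (p : 'I_n * 'I_n) : (p \in all_pairs n) = (p.1 < p.2).
Proof.
rewrite mem_filter andb_idr // => _.
by case: p => x y; apply: allpairs_f; rewrite mem_enum.
Qed.

Lemma uniq_all_pairs n : uniq (all_pairs n).
Proof.
by apply/filter_uniq/allpairs_uniq; rewrite ?enum_uniq // => -[? ?] [? ?] _ _ /= [-> ->].
Qed.

Lemma traffic_all_pairs n (j k : 'I_n) : j != k -> traffic (all_pairs n) j k = 1.
Proof.
move=> ne_jk; change (count (predU (pred1 (j, k)) (pred1 (k, j))) (all_pairs n) = 1).
have disjoint : count (predI (pred1 (j, k)) (pred1 (k, j))) (all_pairs n) = 0.
  apply/eqP; rewrite -leqn0 -(count_pred0 (all_pairs n)); apply: sub_count => p /=.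
  by case/andP => /eqP-> /eqP[eq_jk _]; rewrite eq_jk eqxx in ne_jk.
have := count_predUI (pred1 (j, k)) (pred1 (k, j)) (all_pairs n).
rewrite disjoint addn0 !count_uniq_mem ?uniq_all_pairs // !mem_all_pairs /= => ->.
by move: ne_jk; rewrite neq_ltn; case: ltngtP.
Qed.

Lemma sum_traffic_all_pairs n :
  \sum_(j < n) \sum_(k < n | j < k) traffic (all_pairs n) j k = 'C(n, 2).
Proof.
rewrite -sum_pairs_lt; apply: eq_bigr => j _; apply: eq_bigr => k lt_jk.
by rewrite traffic_all_pairs // neq_ltn lt_jk.
Qed.

Definition unit_demand n (x y : 'I_n) (s0 : bool) (j k : 'I_n) (s : bool) : nat :=
  [&& j == x, k == y & s == s0].

Lemma edge_load_unit_demand n (x y l : 'I_n) s0 : x < y ->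
  \sum_(j < n) \sum_(k < n | j < k) \sum_(s : bool | on_arc j k l s) unit_demand x y s0 j k s
  = on_arc x y l s0.
Proof.
move=> lt_xy; rewrite (bigD1 x) //= [X in _ + X]big1 ?addn0 => [|j /negbTE nx]; last first.
  by apply: big1 => k _; apply: big1 => s _; rewrite /unit_demand nx.
rewrite (bigD1 y) //= [X in _ + X]big1 ?addn0 => [|k /andP[_ /negbTE ny]]; last first.
  by apply: big1 => s _; rewrite /unit_demand ny /= andbF.
rewrite big_mkcond big_bool /unit_demand /on_arc !eqxx /=.
by case: s0; case: (x <= l < y).
Qed.

Section TriangleRing.
Variables (n : nat) (a b c : 'I_n).
Hypotheses (lt_ab : a < b) (lt_bc : b < c).

Definition triangle_ring (j k : 'I_n) (s : bool) : nat :=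
  unit_demand a b false j k s + unit_demand b c false j k s + unit_demand a c true j k s.

Variables (r : nat) (t : routing n r) (i : 'I_r).
Hypothesis t_i : t i = triangle_ring.

Lemma triangle_edge_load l : edge_load t i l = 1.
Proof.
rewrite /edge_load t_i /triangle_ring.
under eq_bigr => j _ do under eq_bigr => k _ do rewrite !big_split.
under eq_bigr => j _ do rewrite !big_split.
rewrite !big_split /= !edge_load_unit_demand ?(ltn_trans lt_ab lt_bc) // /on_arc.
case: (leqP a l) => ?; case: (ltnP l b) => ?; case: (leqP b l) => ?; case: (ltnP l c) => ? //=; lia.
Qed.

Lemma triangle_pair_traffic (j k : 'I_n) : j < k ->
  t i j k false + t i j k true = (j \in [:: a; b; c]) && (k \in [:: a; b; c]).
Proof.
move=> lt_jk; rewrite t_i /triangle_ring /unit_demand !inE -!val_eqE /= !andbT !andbF.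
move: lt_ab lt_bc lt_jk; move: (val a) (val b) (val c) (val j) (val k) => a' b' c' j' k' ? ? ?.
case: (j' =P a') => ?; case: (j' =P b') => ?; case: (j' =P c') => ?;
  case: (k' =P a') => ?; case: (k' =P b') => ?; case: (k' =P c') => ? /=; lia.
Qed.

Lemma triangle_needs_adm v : needs_adm t i v = (v \in [:: a; b; c]).
Proof.
apply/idP/idP => [/existsP[j /existsP[k /and3P[lt_jk endpoint]]]|].
  rewrite triangle_pair_traffic // lt0b => /andP[j_in k_in].
  by case/orP: endpoint => /eqP <-.
have witness (x y w : 'I_n) : x < y -> x \in [:: a; b; c] -> y \in [:: a; b; c] ->
    (x == w) || (y == w) -> needs_adm t i w.
  move=> lt_xy x_in y_in endpoint; apply/existsP; exists x; apply/existsP; exists y.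
  by rewrite lt_xy endpoint triangle_pair_traffic // x_in y_in.
have abc_in : [/\ a \in [:: a; b; c], b \in [:: a; b; c] & c \in [:: a; b; c]].
  by rewrite !inE !eqxx !orbT.
case: abc_in => a_in b_in c_in; rewrite !inE => /or3P[]/eqP->.
- by apply: witness lt_ab a_in b_in _; rewrite eqxx.
- by apply: witness lt_ab a_in b_in _; rewrite eqxx orbT.
- by apply: witness lt_bc b_in c_in _; rewrite eqxx orbT.
Qed.

Lemma triangle_adms : adms_on_ring t i = 3.
Proof.
rewrite /adms_on_ring.
have -> : [set v | needs_adm t i v] = [set v in [:: a; b; c]].
  by apply/setP => v; rewrite !inE triangle_needs_adm !inE.
rewrite cardsE; apply/card_uniqP.
by rewrite /= !inE negb_or -!val_eqE !neq_ltn lt_ab lt_bc (ltn_trans lt_ab lt_bc).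
Qed.
End TriangleRing.

(* Vertex v stands for the nonzero vector of F_2^4 with binary digits v + 1;
   the line of PG(3,2) through x and y is {x, y, x + y}. *)
Definition pg32_third (a b : nat) : nat := (Nat.lxor a.+1 b.+1).-1.

Definition steiner_lines : seq (nat * nat * nat) :=
  [seq (p.1, p.2, pg32_third p.1 p.2) | p <- [seq (a, b) | a <- iota 0 15, b <- iota 0 15]
     & p.1 < p.2 < pg32_third p.1 p.2].

Definition on_line (v : nat) (l : nat * nat * nat) : bool :=
  let: (a, b, c) := l in v \in [:: a; b; c].

Lemma size_steiner_lines : size steiner_lines = 35.
Proof. by vm_compute. Qed.

Lemma steiner_lines_cover (j k : 'I_15) : j < k ->
  count (fun l => on_line j l && on_line k l) steiner_lines = 1.
Proof.
have cover : all (fun j => all (fun k => (j < k) ==>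
    (count (fun l => on_line j l && on_line k l) steiner_lines == 1)) (iota 0 15)) (iota 0 15).
  by vm_compute.
move=> lt_jk; move/allP/(_ j): cover; rewrite mem_iota ltn_ord => /(_ isT).
by move/allP/(_ k); rewrite mem_iota ltn_ord lt_jk => /(_ isT) /eqP.
Qed.

Definition line_ring (l : nat * nat * nat) : 'I_15 -> 'I_15 -> bool -> nat :=
  let: (a, b, c) := l in triangle_ring (inord a) (inord b) (inord c).

Definition steiner_routing : routing 15 35 :=
  fun i => line_ring (nth (0, 0, 0) steiner_lines i).

Lemma steiner_ring (i : 'I_35) : exists a b c : 'I_15,
  [/\ a < b, b < c, steiner_routing i = triangle_ring a b c &
      forall v : 'I_15, (v \in [:: a; b; c]) = on_line v (nth (0, 0, 0) steiner_lines i)].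
Proof.
have sorted : all (fun l : nat * nat * nat => let: (a, b, c) := l in [&& a < b, b < c & c < 15])
    steiner_lines by vm_compute.
move/allP/(_ (nth (0, 0, 0) steiner_lines i)): sorted.
rewrite mem_nth ?size_steiner_lines // /steiner_routing /line_ring /on_line.
case: nth => [[a b] c] /(_ isT) /and3P[lt_ab lt_bc lt_c].
have lt_b := ltn_trans lt_bc lt_c; have lt_a := ltn_trans lt_ab lt_b.
exists (inord a), (inord b), (inord c); rewrite !inordK //; split=> // v.
by rewrite -(mem_map val_inj) /= !inordK.
Qed.

Lemma steiner_feasible : feasible 1 (all_pairs 15) steiner_routing.
Proof.
split=> [j k lt_jk | i l]; last first.
  have [a [b [c [lt_ab lt_bc t_i _]]]] := steiner_ring i.
  by have := triangle_edge_load lt_ab lt_bc t_i l; rewrite /edge_load => ->.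
rewrite traffic_all_pairs ?neq_ltn ?lt_jk // -[RHS](steiner_lines_cover lt_jk) -sum1_count.
rewrite (big_nth (0, 0, 0)) size_steiner_lines big_mkord [RHS]big_mkcond /=.
apply: eq_bigr => i _; have [a [b [c [lt_ab lt_bc t_i on_line_i]]]] := steiner_ring i.
by rewrite (triangle_pair_traffic lt_ab lt_bc t_i lt_jk) !on_line_i; case: (_ && _).
Qed.

Lemma steiner_adms (i : 'I_35) : adms_on_ring steiner_routing i = 3.
Proof.
by have [a [b [c [lt_ab lt_bc t_i _]]]] := steiner_ring i; rewrite (triangle_adms lt_ab lt_bc t_i).
Qed.

Lemma steiner_cost : cost steiner_routing = 105.
Proof. by rewrite /cost (eq_bigr _ (fun i _ => steiner_adms i)) sum_nat_const card_ord. Qed.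

Theorem mainTheorem11 :
  (forall j k : 'I_15, j != k -> traffic (all_pairs 15) j k = 1) /\
  is_min_cost 1 (all_pairs 15) 105 /\
  exists t : routing 15 35,
    feasible 1 (all_pairs 15) t /\ cost t = 105 /\
    forall i : 'I_35, adms_on_ring t i = 3.
Proof.
split; first exact: traffic_all_pairs.
split; last by exists steiner_routing; split; [|split]; [exact: steiner_feasible |
  exact: steiner_cost | exact: steiner_adms].
split; first by exists 35, steiner_routing; split; [exact: steiner_feasible | exact: steiner_cost].
move=> r t feas; rewrite -[cost t]mul1n -[105]/('C(15, 2)) -sum_traffic_all_pairs.
exact: sum_traffic_le_cost feas.
Qed.
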